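(* Fix a $\mathbb{Z}$-basis $u_1,\dots,u_d$ of $\mathcal{O}_K$. Let $\Lambda=\mathcal{O}_Kv_1\oplus\cdots\oplus\mathcal{O}_Kv_k\subseteq K_{\mathbb{R}}^m$ be a free $\mathcal{O}_K$-module of rank $k\leq m$. Then there exists a $\mathbb{Z}$-basis $\{w_{ij}\}_{1\leq i\leq k,\,1\leq j\leq d}$ of $\Lambda$ such that for all $i,j$ \[ c\,\|v_i\|\leq\|w_{ij}\|\leq c'\,\|v_i\|, \] where $c,c'>0$ depend only on the fixed $\mathbb{Z}$-basis of $\mathcal{O}_K$, and not on $v_1,\dots,v_k$, $\Lambda$, $k$ or $m$.
   Context: $K$ is a number field of degree $d$, $K_{\mathbb{R}}=K\otimes\mathbb{R}$ with norm $\|x\|^2=|\Delta_K|^{-2/d}\operatorname{Tr}(x\bar{x})$ ($\Delta_K$ the discriminant, $\bar{\ }$ complex conjugation at complex places), and $K_{\mathbb{R}}^m$ carries the orthogonal sum of $m$ copies of this norm. *)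

From HB Require Import structures.
From mathcomp Require Import all_boot all_order all_algebra all_field.
From mathcomp Require Import reals exp.
From mathcomp Require Import complex.
Set Implicit Arguments. Unset Strict Implicit. Unset Printing Implicit Defensive.
Import Order.TTheory GRing.Theory Num.Theory.
Local Open Scope ring_scope.

Section NumberField.
Variable K : fieldExtType rat.

Definition integral_elt (x : K) : Prop :=
  exists p : {poly int}, p \is monic /\ root (map_poly (fun z : int => z%:~R) p) x.

Definition is_Zbasis_OK (d : nat) (u : d.-tuple K) : Prop :=
  (forall x : K, integral_elt x <->
     exists a : 'I_d -> int, x = \sum_(j < d) (a j)%:~R * tnth u j) /\
  (forall a : 'I_d -> int, \sum_(j < d) (a j)%:~R * tnth u j = 0 ->
     forall j, a j = 0).

Variable R : realType.
Local Notation C := (R[i]).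

Definition all_embeddings (d : nat) (sigma : 'I_d -> {rmorphism K -> C}) : Prop :=
  (forall s t : 'I_d, (forall x, sigma s x = sigma t x) -> s = t) /\
  (forall f : {rmorphism K -> C}, exists s : 'I_d, forall x, f x = sigma s x).

Definition abs2C (z : C) : R := let: Complex a b := z in a ^+ 2 + b ^+ 2.

Variables (d : nat) (u : d.-tuple K) (sigma : 'I_d -> {rmorphism K -> C}).

(* |Delta_K| = |det (sigma_s(u_j))|^2 *)
Definition abs_disc : R := abs2C (\det (\matrix_(s < d, j < d) sigma s (tnth u j))).

(* K_R = K (x)_Q R, identified with R^d via the R-basis u_j (x) 1:
   the row vector a stands for sum_j a_j u_j. *)
Definition KR := 'rV[R]_d.

(* R-linear extension of multiplication by b in K on K_R *)
Definition mulKR (b : K) (a : KR) : KR :=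
  \row_(k < d) \sum_(j < d) a 0 j * ratr (coord u k (b * tnth u j)).

Definition embKR (a : KR) (s : 'I_d) : C :=
  \sum_(j < d) (a 0 j)%:C%C * sigma s (tnth u j).

(* ||a||^2 = |Delta_K|^(-2/d) Tr(a abar) = |Delta_K|^(-2/d) sum_sigma |sigma(a)|^2 *)
Definition KRnorm2 (a : KR) : R :=
  abs_disc `^ (- (2 / d%:R)) * \sum_(s < d) abs2C (embKR a s).

(* K_R^m : m rows, each an element of K_R *)
Definition KRm (m : nat) := 'M[R]_(m, d).

Definition KRm_norm (m : nat) (x : KRm m) : R :=
  Num.sqrt (\sum_(l < m) KRnorm2 (row l x)).

Definition mulKRm (m : nat) (b : K) (x : KRm m) : KRm m :=
  \matrix_(l < m, k < d) mulKR b (row l x) 0 k.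

Definition OK_independent (m k : nat) (v : 'I_k -> KRm m) : Prop :=
  forall b : 'I_k -> K, (forall i, integral_elt (b i)) ->
    \sum_(i < k) mulKRm (b i) (v i) = 0 -> forall i, b i = 0.

Definition in_Lambda (m k : nat) (v : 'I_k -> KRm m) (x : KRm m) : Prop :=
  exists b : 'I_k -> K, (forall i, integral_elt (b i)) /\
    x = \sum_(i < k) mulKRm (b i) (v i).

Definition is_Zbasis_Lambda (m k : nat) (v : 'I_k -> KRm m)
    (w : 'I_k -> 'I_d -> KRm m) : Prop :=
  (forall i j, in_Lambda v (w i j)) /\
  (forall x, in_Lambda v x ->
     exists n : 'I_k -> 'I_d -> int, x = \sum_(i < k) \sum_(j < d) w i j *~ n i j) /\
  (forall n : 'I_k -> 'I_d -> int,
     \sum_(i < k) \sum_(j < d) w i j *~ n i j = 0 -> forall i j, n i j = 0).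

End NumberField.

From HB Require Import structures.
From mathcomp Require Import all_boot all_order all_algebra all_field.
From mathcomp Require Import reals exp.
From mathcomp Require Import complex.
From mathcomp Require Import ring.
Import Order.TTheory GRing.Theory Num.Theory.
Local Open Scope ring_scope.

(* Take w_ij = u_j v_i.  As every embedding is multiplicative, the
   embeddings of the components of u_j v_i are those of v_i multiplied by
   sigma_s(u_j), so ||u_j v_i||^2 lies between min_s |sigma_s(u_j)|^2 ||v_i||^2
   and max_s |sigma_s(u_j)|^2 ||v_i||^2; these finitely many numbers are
   positive because u_j <> 0.  That the u_j v_i form a Z-basis of Lambda is
   the fact that u is a Z-basis of O_K and that the v_i are O_K-free. *)

Section AbsSquare.
Context {R : realType}.

Lemma abs2CM (x y : R[i]) : abs2C (x * y) = abs2C x * abs2C y.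
Proof. by case: x => a b; case: y => c e /=; ring. Qed.

Lemma abs2C_ge0 (x : R[i]) : 0 <= abs2C x.
Proof. by case: x => a b /=; rewrite addr_ge0 ?sqr_ge0. Qed.

Lemma abs2C_gt0 (x : R[i]) : x != 0 -> 0 < abs2C x.
Proof.
case: x => a b hx; rewrite lt_def abs2C_ge0 andbT /=.
by rewrite paddr_eq0 ?sqr_ge0 // !sqrf_eq0; apply: contra hx => /andP[/eqP -> /eqP ->].
Qed.

Lemma finite_family_pos_bounds {I : finType} {F : I -> R} :
  (forall i, 0 < F i) -> exists c C : R, [/\ 0 < c, 0 < C & forall i, c <= F i <= C].
Proof.
move=> F_gt0; exists (\big[Order.min/1]_i F i), (\big[Order.max/1]_i F i); split.
- by apply: lt_bigmin => // i _; apply: F_gt0.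
- by apply: (lt_le_trans ltr01); apply: bigmax_ge_id.
- by move=> i; rewrite bigmin_le le_bigmax.
Qed.

End AbsSquare.

Lemma int_independent_free (V : vectType rat) (n : nat) (X : n.-tuple V) :
  (forall a : 'I_n -> int, \sum_(j < n) tnth X j *~ a j = 0 -> forall j, a j = 0) ->
  free X.
Proof.
move=> Xfree; apply/freeP => k hk.
pose D : int := \prod_(i < n) denq (k i).
have D_neq0 : (D%:~R : rat) != 0.
  by rewrite intr_eq0 prodf_seq_neq0; apply/allP => i _ /=; apply: denq_neq0.
pose a i : int := numq (k i) * \prod_(j < n | j != i) denq (k j).
have aE i : (a i)%:~R = k i * D%:~R.
  by rewrite /a /D [in RHS](bigD1 i) //= !intrM numqE mulrA.
have aX : \sum_(j < n) tnth X j *~ a j = D%:~R *: \sum_(i < n) k i *: X`_i.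
  rewrite scaler_sumr; apply: eq_bigr => i _.
  by rewrite -scaler_int aE scalerA mulrC (tnth_nth 0).
move=> i; have := Xfree a; rewrite aX hk scaler0 => /(_ erefl i).
move/(congr1 (fun z : int => (z%:~R : rat))); rewrite aE /= => /eqP.
by rewrite mulf_eq0 (negbTE D_neq0) orbF => /eqP.
Qed.

Section MultiplicationByK.
Context {K : fieldExtType rat} {R : realType} {d : nat} (u : d.-tuple K).

Lemma mulKRDl b1 b2 (a : KR R d) : mulKR u (b1 + b2) a = mulKR u b1 a + mulKR u b2 a.
Proof.
apply/rowP => k; rewrite !mxE -big_split; apply: eq_bigr => j _ /=.
by rewrite mulrDl linearD rmorphD mulrDr.
Qed.

Lemma mulKR0l (a : KR R d) : mulKR u 0 a = 0.
Proof.
by apply/rowP => k; rewrite !mxE big1 // => j _; rewrite mul0r linear0 rmorph0 mulr0.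
Qed.

Lemma mulKRzl (z : int) b (a : KR R d) : mulKR u (z%:~R * b) a = mulKR u b a *~ z.
Proof.
rewrite -[mulKR u b a *~ z]scaler_int; apply/rowP => k.
rewrite !mxE mulr_sumr; apply: eq_bigr => j _.
by rewrite -mulrA [in LHS]mulrzl raddfMz rmorphMz mulrzAr mulrzl.
Qed.

Context {m : nat}.

Lemma row_mulKRm b (x : KRm R d m) l : row l (mulKRm u b x) = mulKR u b (row l x).
Proof. by apply/rowP => k; rewrite !mxE. Qed.

Lemma mulKRmDl b1 b2 (x : KRm R d m) :
  mulKRm u (b1 + b2) x = mulKRm u b1 x + mulKRm u b2 x.
Proof. by apply/matrixP => l k; rewrite [LHS]mxE mulKRDl !mxE. Qed.

Lemma mulKRm0l (x : KRm R d m) : mulKRm u 0 x = 0.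
Proof. by apply/matrixP => l k; rewrite [LHS]mxE mulKR0l !mxE. Qed.

Lemma mulKRmzl (z : int) b (x : KRm R d m) : mulKRm u (z%:~R * b) x = mulKRm u b x *~ z.
Proof. by apply/matrixP => l k; rewrite [LHS]mxE mulKRzl -!scaler_int !mxE. Qed.

Lemma mulKRm_int_suml (a : 'I_d -> int) (x : KRm R d m) :
  mulKRm u (\sum_(j < d) (a j)%:~R * tnth u j) x = \sum_(j < d) mulKRm u (tnth u j) x *~ a j.
Proof.
rewrite (big_morph (fun b => mulKRm u b x) (fun b1 b2 => mulKRmDl b1 b2 x) (mulKRm0l x)).
by apply: eq_bigr => j _; rewrite mulKRmzl.
Qed.

End MultiplicationByK.

Lemma free_dim_basis {F : fieldType} {V : vectType F} {n : nat} {X : n.-tuple V} :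
  \dim {:V} = n -> free X -> basis_of fullv X.
Proof. by move=> dimV Xfree; rewrite basisEfree Xfree subvf size_tuple dimV /=. Qed.

Section EmbeddingBounds.
Context {K : fieldExtType rat} {R : realType} {d : nat} {u : d.-tuple K}.
Context {sigma : 'I_d -> {rmorphism K -> R[i]}}.
Hypothesis u_basis : basis_of fullv u.

Lemma embKR_mulKR b (a : KR R d) s :
  embKR u sigma (mulKR u b a) s = sigma s b * embKR u sigma a s.
Proof.
rewrite /embKR /mulKR.
under eq_bigr => k _ do rewrite mxE rmorph_sum /= mulr_suml.
rewrite exchange_big mulr_sumr; apply: eq_bigr => j _ /=.
rewrite mulrCA -rmorphM /= {2}(coord_basis u_basis (memvf (b * tnth u j))).
rewrite rmorph_sum mulr_sumr; apply: eq_bigr => k _ /=.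
rewrite -mulr_algl alg_num_field rmorphM /= fmorph_rat rmorphM /= fmorph_rat.
by rewrite mulrA (tnth_nth 0 u k).
Qed.

Lemma KRnorm2_ge0 (a : KR R d) : 0 <= KRnorm2 u sigma a.
Proof. by rewrite mulr_ge0 ?powR_ge0 // sumr_ge0 // => s _; apply: abs2C_ge0. Qed.

Context {lo hi : R} {b : K}.
Hypothesis sigma_b_bounds : forall s, lo <= abs2C (sigma s b) <= hi.

Lemma KRnorm2_mulKR_bounds (a : KR R d) :
  lo * KRnorm2 u sigma a <= KRnorm2 u sigma (mulKR u b a) <= hi * KRnorm2 u sigma a.
Proof.
rewrite /KRnorm2 [lo * _]mulrCA [hi * _]mulrCA.
under [X in _ <= _ * X <= _]eq_bigr => s _ do rewrite embKR_mulKR abs2CM.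
by apply/andP; split; apply: ler_wpM2l; rewrite ?powR_ge0 // mulr_sumr;
  apply: ler_sum => s _; rewrite ler_wpM2r ?abs2C_ge0 //; case/andP: (sigma_b_bounds s).
Qed.

(* The casts make [*] elaborate at the structure instance of [R] itself, as in
   [lemma2p15]; otherwise matching the two statements is prohibitively slow. *)
Lemma KRm_norm_mulKRm_bounds {m : nat} (x : KRm R d m) : 0 <= lo -> 0 <= hi ->
  (Num.sqrt lo : R) * KRm_norm u sigma x <= KRm_norm u sigma (mulKRm u b x) <=
  (Num.sqrt hi : R) * KRm_norm u sigma x.
Proof.
move=> lo_ge0 hi_ge0; rewrite /KRm_norm -!sqrtrM //.
rewrite (eq_bigr _ (fun l _ => congr1 (KRnorm2 u sigma) (row_mulKRm u b x l))).
have sum_ge0 (f : 'I_m -> KR R d) : 0 <= \sum_(l < m) KRnorm2 u sigma (f l).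
  by apply: sumr_ge0 => l _; apply: KRnorm2_ge0.
rewrite !ler_sqrt ?mulr_ge0 ?sum_ge0 // !mulr_sumr.
by apply/andP; split; apply: ler_sum => l _;
  case/andP: (KRnorm2_mulKR_bounds (row l x)).
Qed.

End EmbeddingBounds.

Lemma integral_elt0 (K : fieldExtType rat) : integral_elt (0 : K).
Proof. by exists 'X; rewrite monicX map_polyX rootX. Qed.

Section ZBasisOfLambda.
Context {K : fieldExtType rat} {R : realType} {d : nat} {u : d.-tuple K}.
Hypothesis u_Zbasis : is_Zbasis_OK u.

Lemma Zbasis_OK_free : free u.
Proof.
apply: int_independent_free => a; under eq_bigr => j _ do rewrite -mulrzl.
exact: u_Zbasis.2.
Qed.

Lemma integral_int_comb (a : 'I_d -> int) :
  integral_elt (\sum_(j < d) (a j)%:~R * tnth u j).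
Proof. by apply/(u_Zbasis.1 _); exists a. Qed.

Lemma integral_Zbasis_OK j : integral_elt (tnth u j).
Proof.
have := integral_int_comb (fun j' => (j' == j)%:Z).
rewrite (bigD1 j) //= eqxx mul1r big1 ?addr0 // => j' /negbTE ->.
by rewrite mul0r.
Qed.

Lemma mulKRm_Zbasis_Lambda {m k : nat} (v : 'I_k -> KRm R d m) :
  OK_independent u v -> is_Zbasis_Lambda u v (fun i j => mulKRm u (tnth u j) (v i)).
Proof.
move=> v_indep; split; [|split].
- move=> i j; exists (fun i' => if i' == i then tnth u j else 0); split.
    by move=> i'; case: eqP => _; [apply: integral_Zbasis_OK | apply: integral_elt0].
  by rewrite (bigD1 i) //= eqxx big1 ?addr0 // => i' /negbTE ->; rewrite mulKRm0l.
- move=> x [b [b_int ->]].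
  have /fin_all_exists [a bE] : forall i, exists a : 'I_d -> int,
      b i = \sum_(j < d) (a j)%:~R * tnth u j by move=> i; apply/(u_Zbasis.1 _).
  by exists a; under eq_bigr => i _ do rewrite bE mulKRm_int_suml.
- move=> n n0 i j.
  have := v_indep _ (fun i => integral_int_comb (n i)).
  under eq_bigr => i' _ do rewrite mulKRm_int_suml.
  by move=> /(_ n0 i) /u_Zbasis.2; apply.
Qed.

End ZBasisOfLambda.

Theorem lemma2p15 (R : realType) (K : fieldExtType rat) (d : nat)
  (hd : \dim {:K} = d)
  (sigma : 'I_d -> {rmorphism K -> R[i]}) (hsigma : all_embeddings sigma)
  (u : d.-tuple K) (hu : is_Zbasis_OK u) :
  exists c c' : R, 0 < c /\ 0 < c' /\
    forall (m k : nat) (hkm : (k <= m)%N) (v : 'I_k -> KRm R d m),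
      OK_independent u v ->
      exists w : 'I_k -> 'I_d -> KRm R d m,
        is_Zbasis_Lambda u v w /\
        forall i j,
          c * KRm_norm u sigma (v i) <= KRm_norm u sigma (w i j) /\
          KRm_norm u sigma (w i j) <= c' * KRm_norm u sigma (v i).
Proof.
have u_free := Zbasis_OK_free hu.
have u_basis := free_dim_basis hd u_free.
have sigma_u_gt0 (p : 'I_d * 'I_d) : 0 < abs2C (sigma p.1 (tnth u p.2)).
  by rewrite abs2C_gt0 // fmorph_eq0 (free_not0 u_free) ?mem_tnth.
have [c2 [C2 [c2_gt0 C2_gt0 sigma_u_bounds]]] := finite_family_pos_bounds sigma_u_gt0.
exists (Num.sqrt c2), (Num.sqrt C2).
split; first by rewrite sqrtr_gt0.
split; first by rewrite sqrtr_gt0.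
move=> m k _ v v_indep; exists (fun i j => mulKRm u (tnth u j) (v i)).
split; first exact: mulKRm_Zbasis_Lambda.
move=> i j.
have sigma_uj_bounds s : c2 <= abs2C (sigma s (tnth u j)) <= C2 := sigma_u_bounds (s, j).
have := KRm_norm_mulKRm_bounds u_basis sigma_uj_bounds (v i) (ltW c2_gt0) (ltW C2_gt0).
by move/andP.
Qed.
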